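(* Let $\mathcal{A}$ be a weighted pushdown system with state set $Q$ and stack alphabet $\Gamma$, let $c_1,c_2$ be configurations and $n\in\mathbb{Z}$. Suppose there is a path from $c_1$ to $c_2$ of total weight at least $n$, and let $d\in\mathbb{N}$ be the minimum additional stack height among all paths from $c_1$ to $c_2$ with total weight at least $n$. If $d\geq(|Q|\cdot|\Gamma|)^2$, then there is a path $\pi^*$ from $c_1$ to $c_2$ with additional stack height $d$ that has a pumpable pair $(p_1,p_2)$ with $w(p_1)+w(p_2)>0$.
   Context: A weighted pushdown system (WPS) is $\mathcal{A}=\langle Q,\Gamma,q_0,E,w\rangle$ with finite state set $Q$, initial state $q_0$, finite stack alphabet $\Gamma$ containing a bottom symbol $\bot$ that can be neither pushed nor popped, edges $E\subseteq(Q\times\Gamma)\times(Q\times\mathrm{Com}(\Gamma))$ where $\mathrm{Com}(\Gamma)=\{\mathit{skip},\mathit{pop}\}\cup\{\mathit{push}(z):z\in\Gamma\}$, and weights $w:E\to\mathbb{Z}$. Configurations are $(\alpha,q)$ with $\alpha\in\Gamma^+$, $q\in Q$; $(\alpha',q')$ is a successor of $(\alpha,q)$ if some edge $(q,\gamma,q',\mathit{com})$ has $\gamma$ the top of $\alpha$ and $\alpha'=\mathit{com}(\alpha)$. A path is a sequence of successive configurations (equivalently a start configuration plus a sequence of edges); its weight $w(\pi)$ is the sum of the weights of its edges. For a finite path with stacks $\alpha_1,\dots,\alpha_n$, $\mathrm{ASH}(\pi)=\max_i|\alpha_i|-\max\{|\alpha_1|,|\alpha_n|\}$. A pumpable pair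 of a path $\pi=\langle c_1e_1e_2\dots\rangle$ is a pair of nonempty disjoint blocks of consecutive edges $p_1$ (earlier) and $p_2$ (later) such that for every $j\ge 0$, repeating $p_1$ and $p_2$ each exactly $j$ times (in place) yields a valid path from $c_1$; $w(p_i)$ is the sum of weights of the edges of $p_i$. *)

From HB Require Import structures.
From mathcomp Require Import all_boot all_order all_algebra.
Set Implicit Arguments. Unset Strict Implicit. Unset Printing Implicit Defensive.
Import Order.TTheory GRing.Theory Num.Theory.

Inductive com (G : Type) : Type :=
| Skip : com G
| Pop : com G
| Push : G -> com G.

Record edge (Q G : Type) : Type := Edge {
  e_src : Q; e_top : G; e_dst : Q; e_com : com G }.

Record wps : Type := WPS {
  st : finType;
  alph : finType;
  bot : alph;
  q0 : st;
  E : edge st alph -> bool;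
  w : edge st alph -> int;
  no_push_bot : forall e, E e -> e_com e <> Push bot;
  no_pop_bot : forall e, E e -> e_top e = bot -> e_com e <> Pop alph }.

(* A configuration (alpha, q); stack as a sequence with the top at the head. *)
Definition config (A : wps) : Type := (seq (alph A) * st A)%type.

Definition apply_com (G : Type) (c : com G) (s : seq G) : seq G :=
  match c with
  | Skip => s
  | Pop => behead s
  | Push z => z :: s
  end.

(* Successor configuration via edge e (None if e is not applicable or
   the resulting stack is not in Gamma^+). *)
Definition step (A : wps) (c : config A) (e : edge (st A) (alph A))
  : option (config A) :=
  match c.1 with
  | [::] => None
  | g :: _ =>
      if [&& E e, c.2 == e_src e & g == e_top e] then
        let s' := apply_com (e_com e) c.1 in
        if s' is [::] then None else Some (s', e_dst e)
      else None
  end.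

(* Runs the edge sequence from c; returns the successive configurations
   after c (not including c), or None if the path is invalid. *)
Fixpoint run (A : wps) (c : config A) (es : seq (edge (st A) (alph A)))
  : option (seq (config A)) :=
  match es with
  | [::] => Some [::]
  | e :: es' =>
      match step c e with
      | None => None
      | Some c' =>
          match run c' es' with
          | None => None
          | Some cs => Some (c' :: cs)
          end
      end
  end.

Definition valid_path (A : wps) (c : config A) (es : seq (edge (st A) (alph A)))
  : Prop := c.1 != [::] /\ run c es <> None.

Definition path_from_to (A : wps) (c1 c2 : config A)
  (es : seq (edge (st A) (alph A))) : Prop :=
  c1.1 != [::] /\ exists cs, run c1 es = Some cs /\ last c1 cs = c2.

Definition pweight (A : wps) (es : seq (edge (st A) (alph A))) : int :=
  \sum_(e <- es) w e.

Definition ash (A : wps) (c : config A) (es : seq (edge (st A) (alph A))) : nat :=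
  match run c es with
  | None => 0
  | Some cs =>
      (\max_(x <- c :: cs) size x.1 - maxn (size c.1) (size (last c cs).1))%N
  end.

Definition rep (T : Type) (j : nat) (p : seq T) : seq T := flatten (nseq j p).

Definition pumpable_pair (A : wps) (c : config A)
  (es p1 p2 : seq (edge (st A) (alph A))) : Prop :=
  (0 < size p1)%N /\ (0 < size p2)%N /\
  exists x y z, es = x ++ p1 ++ y ++ p2 ++ z /\
    forall j : nat, valid_path c (x ++ rep j p1 ++ y ++ rep j p2 ++ z).

(* Along the run the stack height [h] moves by at most one per step and climbs
   [d] above both ends.  For each level [l] crossed by this climb consider the
   last time [rise l] before the summit and the first time [fall l] after it
   at which the height is [l]; between them the height stays above [l].
   Labelling times by (state, top symbol), two levels carry the same pair of
   labels at their ends (pigeonhole), giving nested arches [r1 < r2 <= f2 < f1].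
   Since the part of the stack below an arch is never inspected inside it
   (framing), the climb [p1 = es[r1,r2)] pushes a word [v] and the descent
   [p2 = es[f2,f1)] pops it, independently of the stack below: [(p1, p2)] is a
   pumpable pair, and cutting it out does not increase the stack height.  If
   [w(p1) + w(p2) <= 0] the cut path is shorter, still of weight [>= n] and
   still of additional stack height [d]; induction on length concludes. *)
From HB Require Import structures.
From mathcomp Require Import all_boot all_order all_algebra.
From mathcomp Require Import zify.
Set Implicit Arguments. Unset Strict Implicit. Unset Printing Implicit Defensive.
Import Order.TTheory GRing.Theory Num.Theory.

Fixpoint last_sat (P : pred nat) (t : nat) : nat :=
  if P t then t else if t is t'.+1 then last_sat P t' else 0.

Lemma last_satP (P : pred nat) (t : nat) : P 0 ->
  [/\ last_sat P t <= t, P (last_sat P t) & forall k, last_sat P t < k <= t -> ~~ P k].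
Proof.
move=> P0; elim: t => [|t IH] /=; first by rewrite P0; split=> // k; lia.
case: ifP => [Pt|nPt]; first by split=> // k; lia.
have [le_t P_last after] := IH; split=> [|//|k /andP[lt_k]]; first by lia.
rewrite leq_eqVlt => /orP[/eqP -> | le_kt]; first by rewrite nPt.
by apply: after; rewrite lt_k.
Qed.

Definition rise (h : nat -> nat) (t l : nat) : nat := last_sat (fun k => h k <= l) t.

Lemma riseP (h : nat -> nat) (t l : nat) :
  (forall k, k < t -> h k.+1 <= (h k).+1) -> h 0 <= l <= h t ->
  [/\ rise h t l <= t, h (rise h t l) = l & forall k, rise h t l < k <= t -> l < h k].
Proof.
move=> h_up /andP[h0l lht].
have [le_rt hr_le above] : [/\ rise h t l <= t, h (rise h t l) <= l &
    forall k, rise h t l < k <= t -> l < h k].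
  have [] := last_satP (P := fun k => h k <= l) t h0l.
  by move=> ? ? after; split=> // k /after; rewrite ltnNge.
split=> //; apply/eqP; rewrite eqn_leq hr_le /=.
case: (ltngtP (rise h t l) t) => [lt_rt | | ->] //; last by lia.
have /above : rise h t l < (rise h t l).+1 <= t by rewrite ltnSn.
by have := h_up _ lt_rt; lia.
Qed.

Definition fall (h : nat -> nat) (m t l : nat) : nat :=
  m - rise (fun k => h (m - k)) (m - t) l.

Lemma fallP (h : nat -> nat) (m t l : nat) : t <= m ->
  (forall k, k < m -> h k <= (h k.+1).+1) -> h m <= l <= h t ->
  [/\ t <= fall h m t l <= m, h (fall h m t l) = l &
      forall k, t <= k < fall h m t l -> l < h k].
Proof.
move=> le_tm h_down hl; set g := fun k => h (m - k).
have g_up k : k < m - t -> g k.+1 <= (g k).+1.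
  move=> lt_k; have e : (m - k.+1).+1 = m - k by lia.
  by have := h_down (m - k.+1); rewrite /g e; lia.
have g_range : g 0 <= l <= g (m - t) by rewrite /g subn0 subKn.
have [le_r gr above] := riseP g_up g_range.
rewrite /fall -/g; split; [lia | exact: gr | move=> k lt_k].
have /above : rise g (m - t) l < m - k <= m - t by lia.
by rewrite /g subKn //; lia.
Qed.

Lemma pigeonhole (X : finType) (g : nat -> X) (n : nat) :
  #|X| <= n -> exists i j, [/\ i < j, j <= n & g i = g j].
Proof.
move=> card_X; pose g' (i : 'I_n.+1) := g i.
have /injectivePn[i [j neq_ij eq_g]] : ~~ injectiveb g'.
  apply/injectiveP => /leq_card; rewrite card_ord; lia.
have := ltn_ord i; have := ltn_ord j; rewrite -(inj_eq val_inj) in neq_ij.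
case: (ltngtP i j) neq_ij => // [lt_ij | lt_ji] _ lt_j lt_i.
  by exists i, j; split.
by exists j, i; split.
Qed.

(* In a run these delimit a pumpable pair. *)
Definition nested_arches (X : Type) (h : nat -> nat) (lab : nat -> X)
    (m r1 r2 f2 f1 : nat) : Prop :=
  [/\ [&& r1 < r2, r2 <= f2, f2 < f1 & f1 <= m], lab r1 = lab r2 /\ lab f2 = lab f1,
      h r1 = h f1 /\ h r2 = h f2,
      (forall k, r1 < k < f1 -> h r1 < h k) &
      (forall k, r2 < k < f2 -> h r2 < h k)].

(* A profile on [0..m] with unit steps whose peak [h t] exceeds both ends
   by at least [#|X|^2] has nested arches: each level [l] between the ends
   and the peak gives an arch [rise l, fall l], and two of these levels
   carry the same pair of end labels. *)
Lemma nested_arches_exist (X : finType) (h : nat -> nat) (lab : nat -> X) (m t B : nat) :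
  t <= m -> (forall k, k < m -> h k.+1 <= (h k).+1) ->
  (forall k, k < m -> h k <= (h k.+1).+1) ->
  h 0 <= B -> h m <= B -> #|X| ^ 2 <= h t - B ->
  exists r1 r2 f2 f1, nested_arches h lab m r1 r2 f2 f1.
Proof.
move=> le_tm h_up h_down h0B hmB card_X.
pose r l := rise h t l; pose f l := fall h m t l.
have arch l : B <= l <= h t -> [/\ r l <= t <= f l, f l <= m, h (r l) = l /\ h (f l) = l,
    forall k, r l < k <= t -> l < h k & forall k, t <= k < f l -> l < h k].
  move=> /andP[le_Bl le_lt]; have h_up_t k : k < t -> h k.+1 <= (h k).+1.
    by move=> lt_k; apply: h_up; apply: leq_trans le_tm.
  have [le_rt hr above_r] := @riseP h t l h_up_t (ltac:(lia)).
  have [/andP[le_tf le_fm] hf above_f] := @fallP h m t l le_tm h_down (ltac:(lia)).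
  by split=> //; rewrite le_rt.
have inside l k : B <= l <= h t -> r l < k < f l -> l < h k.
  move=> /arch[_ _ _ above_r above_f] /andP[lt_rk lt_kf].
  case: (leqP k t) => le_kt; first by apply: above_r; rewrite lt_rk.
  by apply: above_f; rewrite lt_kf ltnW.
pose labs i := (lab (r (B + i)), lab (f (B + i))).
have [i [j [lt_ij le_j [eq_r eq_f]]]] : exists i j, [/\ i < j, j <= h t - B & labs i = labs j].
  by apply: pigeonhole; rewrite card_prod mulnn.
have lev_i : B <= B + i <= h t by lia.
have lev_j : B <= B + j <= h t by lia.
have [/andP[le_r1 le_f1] le_f1m [h_r1 h_f1] rise1 fall1] := arch _ lev_i.
have [/andP[le_r2 le_f2] le_f2m [h_r2 h_f2] rise2 fall2] := arch _ lev_j.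
exists (r (B + i)), (r (B + j)), (f (B + j)), (f (B + i)).
(* The lower level is left earlier and reached again later. *)
have lt_r : r (B + i) < r (B + j).
  case: ltnP => //; rewrite leq_eqVlt => /orP[/eqP eq_ji | lt_ji].
    by move: h_r2; rewrite eq_ji h_r1; lia.
  have /rise2 : r (B + j) < r (B + i) <= t by rewrite lt_ji.
  by rewrite h_r1; lia.
have lt_f : f (B + j) < f (B + i).
  case: ltnP => //; rewrite leq_eqVlt => /orP[/eqP eq_ij | lt_ij'].
    by move: h_f1; rewrite eq_ij h_f2; lia.
  have /fall2 : t <= f (B + i) < f (B + j) by rewrite lt_ij' le_f1.
  by rewrite h_f1; lia.
split; [apply/and4P; split; lia | by [] | lia | |].
- by move=> k /(inside _ _ lev_i); rewrite h_r1.
- by move=> k /(inside _ _ lev_j); rewrite h_r2.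
Qed.

Definition slice (T : Type) (a b : nat) (s : seq T) : seq T := take (b - a) (drop a s).

Lemma size_slice (T : Type) (a b : nat) (s : seq T) : b <= size s ->
  size (slice a b s) = b - a.
Proof. by move=> le_b; rewrite /slice size_takel // size_drop leq_sub2r. Qed.

Lemma slice_cat (T : Type) (a b c : nat) (s : seq T) : a <= b -> b <= c ->
  slice a b s ++ slice b c s = slice a c s.
Proof.
move=> le_ab le_bc; rewrite /slice.
have -> : drop b s = drop (b - a) (drop a s) by rewrite drop_drop subnK.
by rewrite -takeD; congr take; lia.
Qed.

Lemma slice_full (T : Type) (s : seq T) : slice 0 (size s) s = s.
Proof. by rewrite /slice drop0 subn0 take_size. Qed.

Lemma mem_slice (T : eqType) (a b : nat) (s : seq T) x : x \in slice a b s -> x \in s.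
Proof. by move/mem_take/mem_drop. Qed.

Lemma all_slice (T : Type) (P : pred T) (c : T) (cs : seq T) (a b : nat) :
  (forall k, a < k <= b -> P (nth c (c :: cs) k)) -> all P (slice a b cs).
Proof.
move=> Pk; apply/(all_nthP c) => i; rewrite /slice size_take_min size_drop => lt_i.
rewrite nth_take; last by lia.
by rewrite nth_drop -[nth c cs _]/(nth c (c :: cs) (a + i).+1); apply: Pk; lia.
Qed.

Lemma rep_swap (T : Type) (j : nat) (p : seq T) : p ++ rep j p = rep j p ++ p.
Proof. by elim: j => [|j IH] /=; rewrite ?cats0 // -catA -IH. Qed.

Section Runs.
Variable A : wps.
Local Notation cfg := (config A).
Local Notation edg := (edge (st A) (alph A)).

Lemma run_cat (c : cfg) (p q : seq edg) : run c (p ++ q) =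
  if run c p is Some cs then omap (cat cs) (run (last c cs) q) else None.
Proof.
elim: p c => [|e p IH] c /=; first by case: (run c q).
case: (step c e) => [c'|] //; rewrite IH.
by case: (run c' p) => [cs|] //=; case: (run _ q).
Qed.

Lemma run_size (c : cfg) (p : seq edg) cs : run c p = Some cs -> size cs = size p.
Proof.
elim: p c cs => [|e p IH] c cs /=; first by case=> <-.
case: (step c e) => [c'|] //; case Hr: (run c' p) => [cs'|] // [<-] /=.
by rewrite (IH _ _ Hr).
Qed.

Lemma run_nth (c : cfg) (p : seq edg) cs (e0 : edg) (k : nat) :
  run c p = Some cs -> k < size p ->
  step (nth c (c :: cs) k) (nth e0 p k) = Some (nth c (c :: cs) k.+1).
Proof.
elim: p c cs k => [|e p IH] c cs k //=.
case Hs: (step c e) => [c'|] //; case Hr: (run c' p) => [cs'|] // [<-].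
case: k => [|k] /= lt_k; first by rewrite Hs.
have sz := run_size Hr.
rewrite (set_nth_default c') /=; last by rewrite sz ltnS ltnW.
by rewrite (set_nth_default c' c) /= ?sz //; apply: IH.
Qed.

Lemma step_size (c c' : cfg) (e : edg) : step c e = Some c' ->
  [/\ c.1 != [::], c'.1 != [::], size c'.1 <= (size c.1).+1 & size c.1 <= (size c'.1).+1].
Proof.
rewrite /step; case: c.1 => [|g s] //; case: ifP => // _.
case: e => /= _ _ d cm; case: cm => [||z] /=; case: s => [|g' s'] //=.
all: by case=> <- /=; rewrite ?ltnS ?leqnSn ?leqnn ?leqW.
Qed.

Lemma run_take (c : cfg) (p : seq edg) cs (b : nat) :
  run c p = Some cs -> run c (take b p) = Some (take b cs).
Proof.
elim: p c cs b => [|e p IH] c cs b /=; first by case=> <-.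
case Hs: (step c e) => [c'|] //; case Hr: (run c' p) => [cs'|] // [<-].
by case: b => [|b] //=; rewrite Hs (IH _ _ _ Hr).
Qed.

Lemma run_drop (c : cfg) (p : seq edg) cs (a : nat) :
  run c p = Some cs -> a <= size p ->
  run (nth c (c :: cs) a) (drop a p) = Some (drop a cs).
Proof.
elim: p c cs a => [|e p IH] c cs a /=.
  by case=> <-; rewrite leqn0 => /eqP ->.
case Hs: (step c e) => [c'|] //; case Hr: (run c' p) => [cs'|] // [<-].
case: a => [|a] /= le_a; first by rewrite Hs Hr.
by rewrite (set_nth_default c') /= ?(run_size Hr) //; apply: IH.
Qed.

Lemma run_slice (c : cfg) (p : seq edg) cs (a b : nat) :
  run c p = Some cs -> a <= b <= size p ->
  run (nth c (c :: cs) a) (slice a b p) = Some (slice a b cs) /\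
  last (nth c (c :: cs) a) (slice a b cs) = nth c (c :: cs) b.
Proof.
move=> Hr /andP[le_ab le_b]; split.
  by apply: run_take; apply: run_drop => //; apply: leq_trans le_b.
rewrite (last_nth c) size_slice ?(run_size Hr) //.
case E: (b - a) => [|k]; first by have -> : b = a by lia.
rewrite /= /slice E nth_take // nth_drop.
by have -> : b = (a + k).+1 by lia.
Qed.

Definition reachB (c : cfg) (p : seq edg) (c' : cfg) (H : nat) : Prop :=
  exists cs, [/\ run c p = Some cs, last c cs = c' & all (fun x => size x.1 <= H) cs].

Definition reach (c : cfg) (p : seq edg) (c' : cfg) : Prop := exists H, reachB c p c' H.

Lemma reachB_cat (c c' c'' : cfg) (p q : seq edg) (H : nat) :
  reachB c p c' H -> reachB c' q c'' H -> reachB c (p ++ q) c'' H.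
Proof.
move=> [cs [Hr Hl Hall]] [cs' [Hr' Hl' Hall']]; exists (cs ++ cs'); split.
- by rewrite run_cat Hr Hl Hr'.
- by rewrite last_cat Hl.
- by rewrite all_cat Hall Hall'.
Qed.

Lemma reachB_mono (c c' : cfg) (p : seq edg) (H H' : nat) :
  H <= H' -> reachB c p c' H -> reachB c p c' H'.
Proof.
move=> le_H [cs [Hr Hl Hall]]; exists cs; split => //.
by apply: sub_all Hall => x /leq_trans; apply.
Qed.

Lemma reach_nil (c : cfg) : reach c [::] c.
Proof. by exists 0, [::]. Qed.

Lemma reach_run (c c' : cfg) (p : seq edg) : reach c p c' -> run c p <> None.
Proof. by move=> [H [cs [-> _ _]]]. Qed.

Lemma reach_cat (c c' c'' : cfg) (p q : seq edg) :
  reach c p c' -> reach c' q c'' -> reach c (p ++ q) c''.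
Proof.
move=> [H1 R1] [H2 R2]; exists (maxn H1 H2).
apply: reachB_cat; [apply: reachB_mono R1 | apply: reachB_mono R2].
  exact: leq_maxl.
exact: leq_maxr.
Qed.

Lemma ash_reachB (c c' : cfg) (p : seq edg) (H : nat) :
  reachB c p c' H -> size c.1 <= H -> ash c p <= H - maxn (size c.1) (size c'.1).
Proof.
move=> [cs [Hr Hl Hall]] le_c; rewrite /ash Hr Hl leq_sub2r //.
apply/bigmax_leqP_seq => x; rewrite inE => /orP[/eqP -> // | x_cs] _.
exact: (allP Hall).
Qed.

Definition addb (t : seq (alph A)) (x : cfg) : cfg := (x.1 ++ t, x.2).

Lemma frame (p : seq edg) (s t : seq (alph A)) (q : st A) cs : s != [::] ->
  run (s ++ t, q) p = Some cs -> all (fun x => size t < size x.1) cs ->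
  exists cs0, cs = map (addb t) cs0 /\
    forall t', run (s ++ t', q) p = Some (map (addb t') cs0).
Proof.
elim: p s q cs => [|e p IH] s q cs s_ne /=; first by case=> <- _; exists [::].
case: s s_ne => [|g s1] // _; rewrite /step /=.
case: ifP => // Hc.
have app_cat t0 : apply_com (e_com e) ((g :: s1) ++ t0) = apply_com (e_com e) (g :: s1) ++ t0.
  by case: (e_com e).
rewrite app_cat; case Es': (apply_com (e_com e) (g :: s1)) => [|g' s''] /=.
  case: t {IH} => [|g0 t0] //=.
  by case: (run _ p) => [cs1|] // [<-] /= /andP[]; rewrite ltnn.
case Hr: (run _ p) => [cs1|] // [<-] /= /andP[_ Hall].
have [cs0 [E1 E2]] := IH (g' :: s'') (e_dst e) cs1 isT Hr Hall.
exists ((g' :: s'', e_dst e) :: cs0); split; first by rewrite E1.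
by move=> t'; rewrite app_cat Es' /= E2.
Qed.

Lemma frame_reachB (p : seq edg) (s t : seq (alph A)) (q : st A) cs (H : nat) :
  s != [::] -> run (s ++ t, q) p = Some cs -> all (fun x => size t < size x.1) cs ->
  all (fun x => size x.1 <= H) cs ->
  exists u q', last (s ++ t, q) cs = (u ++ t, q') /\
    forall t', reachB (s ++ t', q) p (u ++ t', q') (H + size t' - size t).
Proof.
move=> s_ne Hr Hall le_H; have [cs0 [E1 E2]] := frame s_ne Hr Hall.
case El: (last (s, q) cs0) => [u q'].
have last_addb t' : last (s ++ t', q) (map (addb t') cs0) = (u ++ t', q').
  by rewrite (_ : (s ++ t', q) = addb t' (s, q)) // last_map El.
exists u, q'; split; first by rewrite E1 last_addb.
move=> t'; exists (map (addb t') cs0); split => //.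
rewrite all_map; apply/allP => x x_cs0 /=.
have /(allP le_H) : addb t x \in cs by rewrite E1 map_f.
by rewrite /= !size_cat; lia.
Qed.

Lemma pump_up (s v : seq (alph A)) (q : st A) (p : seq edg) :
  (forall t, reach (s ++ t, q) p (s ++ v ++ t, q)) ->
  forall j t, reach (s ++ t, q) (rep j p) (s ++ rep j v ++ t, q).
Proof.
move=> up; elim=> [|j IH] t /=; first exact: reach_nil.
apply: reach_cat (up t) _.
have -> : rep j.+1 v = rep j v ++ v by rewrite -rep_swap.
by rewrite -catA; apply: IH.
Qed.

Lemma pump_down (s v : seq (alph A)) (q : st A) (p : seq edg) :
  (forall t, reach (s ++ v ++ t, q) p (s ++ t, q)) ->
  forall j t, reach (s ++ rep j v ++ t, q) (rep j p) (s ++ t, q).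
Proof.
move=> down; elim=> [|j IH] t /=; first exact: reach_nil.
by rewrite -catA; apply: reach_cat (down _) (IH t).
Qed.
End Runs.

Lemma top_of_cat (T : Type) (x g : T) (u a : seq T) :
  size a < size (u ++ a) -> head x (u ++ a) = g -> exists v, u = g :: v.
Proof. by case: u => [|y v] /=; [rewrite ltnn | move=> _ ->; exists v]. Qed.

Lemma ex_max_nth (T : Type) (F : T -> nat) (x : T) (s : seq T) :
  exists2 k, k <= size s & F (nth x (x :: s) k) = \max_(y <- x :: s) F y.
Proof.
elim: s x => [|y s IH] x; first by exists 0; rewrite ?big_cons ?big_nil ?maxn0.
have [k le_k Fk] := IH y; rewrite big_cons.
case: (leqP (\max_(z <- y :: s) F z) (F x)) => le_max.
  by exists 0; rewrite // (maxn_idPl le_max).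
by exists k.+1; rewrite //= (set_nth_default y) ?ltnS // Fk; lia.
Qed.

Section Decomposition.
Variable A : wps.
Local Notation cfg := (config A).
Local Notation edg := (edge (st A) (alph A)).

Variables (c1 : cfg) (es : seq edg) (cs : seq cfg).
Hypotheses (c1_ne : c1.1 != [::]) (run_es : run c1 es = Some cs).
Local Notation m := (size es).
Local Notation C k := (nth c1 (c1 :: cs) k).
Local Notation h k := (size (C k).1).
Local Notation M := (\max_(x <- c1 :: cs) size x.1).

Local Notation lab k := ((C k).2, head (bot A) (C k).1).

Lemma run_step_size (k : nat) : k < m ->
  [/\ (C k).1 != [::], (C k.+1).1 != [::], h k.+1 <= (h k).+1 & h k <= (h k.+1).+1].
Proof. by move=> lt_k; apply: step_size (run_nth (Edge c1.2 (bot A) c1.2 (Skip _)) run_es lt_k). Qed.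

Lemma stack_ne (k : nat) : k <= m -> (C k).1 != [::].
Proof. by case: k => [//|k] /run_step_size[]. Qed.

Lemma height_le_max (k : nat) : k <= m -> h k <= M.
Proof.
move=> le_k; apply: (@leq_bigmax_seq _ _ xpredT (fun x : cfg => size x.1)) => //.
by rewrite mem_nth //= (run_size run_es).
Qed.

Lemma last_run : last c1 cs = C m.
Proof. by rewrite (last_nth c1) (run_size run_es). Qed.

Lemma segment (a b : nat) : a <= b <= m -> reachB (C a) (slice a b es) (C b) M.
Proof.
move=> ab; have [Hr Hl] := run_slice run_es ab; exists (slice a b cs); split=> //.
apply/allP => x /mem_slice x_cs /=.
by apply: (@leq_bigmax_seq _ _ xpredT (fun x : cfg => size x.1)); rewrite // inE x_cs orbT.
Qed.

Lemma segment_frame (a b : nat) (s t : seq (alph A)) (q : st A) :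
  a <= b <= m -> C a = (s ++ t, q) -> s != [::] ->
  (forall k, a < k <= b -> size t < h k) ->
  exists u, (C b).1 = u ++ t /\
    forall t', reachB (s ++ t', q) (slice a b es) (u ++ t', (C b).2) (M + size t' - size t).
Proof.
move=> ab Ca s_ne above; have [Hr Hl] := run_slice run_es ab; rewrite Ca in Hr Hl.
have above' : all (fun x => size t < size x.1) (slice a b cs).
  by apply: (all_slice (c := c1)) => k /above.
have [cs' [Hr' _ le_M]] := segment ab.
rewrite Ca Hr in Hr'; case: Hr' => <- in le_M.
have [u [q' [El R]]] := frame_reachB s_ne Hr above' le_M.
by exists u; rewrite -Hl El.
Qed.

Lemma arches_pump (r1 r2 f2 f1 : nat) :
  nested_arches (fun k => h k) (fun k => lab k) m r1 r2 f2 f1 ->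
  exists g dl a v q q', [/\ C r1 = (g :: a, q), C f1 = (dl :: a, q'),
    forall t, reach (g :: t, q) (slice r1 r2 es) (g :: v ++ t, q),
    forall t, reachB (g :: t, q) (slice r2 f2 es) (dl :: t, q') (M + size t - size (v ++ a)) &
    forall t, reach (dl :: v ++ t, q') (slice f2 f1 es) (dl :: t, q')].
Proof.
move=> [/and4P[lt_12 le_22 lt_21 le_1m] [lab_r lab_f] [h_1 h_2] above1 above2].
case E1: (C r1) => [[|g a] q].
  by have := @stack_ne r1 (ltac:(lia)); rewrite E1.
have h_r1 : h r1 = (size a).+1 by rewrite E1.
have climb_above k : r1 < k <= r2 -> size a < h k.
  by move=> lt_k; have := above1 k (ltac:(lia)); lia.
have [u [Eu R1]] := @segment_frame r1 r2 [:: g] a q (ltac:(lia)) E1 isT climb_above.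
have [v Ev] : exists v, u = g :: v.
  apply: (@top_of_cat _ (bot A) g u a); rewrite -Eu; last by move: lab_r; rewrite E1 => -[].
  by have := above1 r2 (ltac:(lia)); lia.
have q_r2 : (C r2).2 = q by move: lab_r; rewrite E1 => -[<-].
have E2 : C r2 = ([:: g] ++ (v ++ a), q).
  by rewrite -q_r2 -[[:: g] ++ _]/((g :: v) ++ a) -Ev -Eu; case: (C r2).
have summit_above k : r2 < k <= f2 -> size (v ++ a) < h k.
  move=> /andP[lt_k]; rewrite leq_eqVlt => /orP[/eqP -> | lt_kf].
    by rewrite -h_2 E2 /= size_cat.
  by have := above2 k (ltac:(lia)); rewrite E2 /= size_cat; lia.
have [w [Ew R2]] := @segment_frame r2 f2 [:: g] (v ++ a) q (ltac:(lia)) E2 isT summit_above.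
have [dl Edl] : exists dl, w = [:: dl].
  case: w Ew {R2} => [|dl [|? ?]] Ew; [ | by exists dl | ];
    by have := h_2; rewrite E2 Ew /= !size_cat /=; lia.
set q' := (C f2).2 in R2.
have Ef2 : C f2 = ((dl :: v) ++ a, q').
  by rewrite -[(dl :: v) ++ a]/([:: dl] ++ v ++ a) -Edl -Ew /q'; case: (C f2).
have descent_above k : f2 < k <= f1 -> size a < h k.
  move=> /andP[lt_k]; rewrite leq_eqVlt => /orP[/eqP -> | lt_kf].
    by rewrite -h_1 h_r1.
  by have := above1 k (ltac:(lia)); lia.
have [w' [Ew' R3]] := @segment_frame f2 f1 (dl :: v) a q' (ltac:(lia)) Ef2 isT descent_above.
have [q_f1 top_f1] : (C f1).2 = q' /\ head (bot A) (C f1).1 = dl.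
  by move: lab_f; rewrite Ef2 => -[-> ->].
have Ew'1 : w' = [:: dl].
  have : size w' = 1 by have := h_1; rewrite h_r1 Ew' size_cat; lia.
  by case: w' Ew' {R3} => [|x [|? ?]] // Ew' _; rewrite -top_f1 Ew'.
rewrite Ev q_r2 in R1; rewrite Edl in R2; rewrite Ew'1 q_f1 in R3.
exists g, dl, a, v, q, q'; split => // [|t|t]; last by exists (M + size t - size a); apply: R3.
- by rewrite -q_f1 -[dl :: a]/([:: dl] ++ a) -Ew'1 -Ew'; case: (C f1).
- by exists (M + size t - size a); apply: R1.
Qed.

Lemma decomposition : (#|st A| * #|alph A|) ^ 2 <= ash c1 es ->
  exists x p1 y p2 z, [/\ es = x ++ p1 ++ y ++ p2 ++ z, pumpable_pair c1 es p1 p2,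
    path_from_to c1 (last c1 cs) (x ++ y ++ z) & ash c1 (x ++ y ++ z) <= ash c1 es].
Proof.
move=> big_ash; set B := maxn (h 0) (h m).
have ash_es : ash c1 es = M - B by rewrite /ash run_es last_run.
have [t le_tm h_t] := ex_max_nth (fun x : cfg => size x.1) c1 cs.
rewrite (run_size run_es) in le_tm.
have h_up k : k < m -> h k.+1 <= (h k).+1 by case/run_step_size.
have h_down k : k < m -> h k <= (h k.+1).+1 by case/run_step_size.
have card_lab : #|{: st A * alph A}| ^ 2 <= h t - B by rewrite card_prod h_t -ash_es.
have [r1 [r2 [f2 [f1 arches]]]] := nested_arches_exist (fun k => lab k) le_tm h_up h_down
  (leq_maxl _ _) (leq_maxr _ _) card_lab.
have [/and4P[lt_12 le_22 lt_21 le_1m] _ _ _ _] := arches.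
have [g [dl [a [v [q [q' [E1 Ef1 climb summit descent]]]]]]] := arches_pump arches.
set x := slice 0 r1 es; set p1 := slice r1 r2 es; set y := slice r2 f2 es.
set p2 := slice f2 f1 es; set z := slice f1 m es.
have Rx : reachB c1 x (g :: a, q) M by rewrite -E1; apply: segment; lia.
have Rz : reachB (dl :: a, q') z (last c1 cs) M by rewrite -Ef1 last_run; apply: segment; lia.
have Ry : reachB (g :: a, q) y (dl :: a, q') M.
  by apply: reachB_mono (summit a); rewrite size_cat; lia.
have es_split : es = x ++ p1 ++ y ++ p2 ++ z.
  by rewrite !slice_cat ?slice_full //; lia.
exists x, p1, y, p2, z; split => //.
- split; first by rewrite size_slice; lia.
  split; first by rewrite size_slice; lia.
  exists x, y, z; split => // j; split => //; apply: (@reach_run _ _ (last c1 cs)).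
  apply: (reach_cat (ex_intro _ M Rx)).
  apply: (reach_cat (pump_up (s := [:: g]) climb j a)).
  apply: (reach_cat (ex_intro _ _ (summit _))).
  apply: (reach_cat (pump_down (s := [:: dl]) descent j a)).
  exact: (ex_intro _ M Rz).
- have [cs' [Hr Hl _]] := reachB_cat Rx (reachB_cat Ry Rz).
  by split=> //; exists cs'.
- have := ash_reachB (reachB_cat Rx (reachB_cat Ry Rz)) (height_le_max (leq0n m)).
  by rewrite ash_es last_run.
Qed.
End Decomposition.

Local Open Scope ring_scope.

Lemma pweight_cat (A : wps) (p q : seq (edge (st A) (alph A))) :
  pweight (p ++ q) = pweight p + pweight q.
Proof. by rewrite /pweight big_cat. Qed.

Lemma pump_or_shorten (A : wps) (c1 c2 : config A) (es : seq (edge (st A) (alph A))) :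
  path_from_to c1 c2 es -> ((#|st A| * #|alph A|) ^ 2 <= ash c1 es)%N ->
  (exists p1 p2, pumpable_pair c1 es p1 p2 /\ 0 < pweight p1 + pweight p2) \/
  exists es', [/\ (size es' < size es)%N, path_from_to c1 c2 es',
                  pweight es <= pweight es' & (ash c1 es' <= ash c1 es)%N].
Proof.
move=> [c1_ne [cs [run_es <-]]] big_ash.
have [x [p1 [y [p2 [z [es_split pump short ash_short]]]]]] := decomposition c1_ne run_es big_ash.
case: (ltrP 0 (pweight p1 + pweight p2)) => [pos | nonpos]; first by left; exists p1, p2; split.
have [size_p1 _] := pump.
right; exists (x ++ y ++ z); split => //.
  by rewrite es_split !size_cat; lia.
by rewrite es_split !pweight_cat; lia.
Qed.

Theorem lemma2 (A : wps) (c1 c2 : config A) (n : int) (d : nat) :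
  (exists es, path_from_to c1 c2 es /\ n <= pweight es) ->
  (exists es, [/\ path_from_to c1 c2 es, n <= pweight es & ash c1 es = d]) ->
  (forall es, path_from_to c1 c2 es -> n <= pweight es -> (d <= ash c1 es)%N) ->
  ((#|st A| * #|alph A|) ^ 2 <= d)%N ->
  exists es, [/\ path_from_to c1 c2 es, ash c1 es = d &
    exists p1 p2, pumpable_pair c1 es p1 p2 /\ 0 < pweight p1 + pweight p2].
Proof.
move=> _ [es0 [path0 w0 ash0]] ash_min big_d.
(* Induction on the length of an optimal path: pump it or pass to a shorter one. *)
have [k le_k] : exists k, (size es0 <= k)%N by exists (size es0).
elim: k es0 le_k path0 w0 ash0 => [|k IH] es le_k path_es w_es ash_es;
  rewrite -ash_es in big_d;
  case: (pump_or_shorten path_es big_d) => [pump | [es' [lt_es' path' w' ash']]];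
  try by exists es.
- by move: lt_es' le_k; lia.
- have w'_n : n <= pweight es' by apply: le_trans w'.
  apply: (IH es') => //; first by lia.
  by apply/eqP; rewrite eqn_leq -{1}ash_es ash' ash_min.
Qed.
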